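(* Let $(E,C)$ be a configuration structure (a set $E$ together with $C\subseteq\mathcal{P}(E)$). Define the event structure $\mathcal{E}(C)=(E,\vdash)$ by $X\vdash Y$ iff $X\cap Y=\emptyset$ and $X\cup Y\in C$ (for $X,Y\subseteq E$). Then $\mathcal{E}(C)$ is pure, and the set of left-closed configurations of $\mathcal{E}(C)$ equals $C$.
   Context: An event structure is a pair $(E,\vdash)$ with $E$ a set and $\vdash\subseteq\mathcal{P}(E)\times\mathcal{P}(E)$. It is pure if $X\vdash Y$ implies $X\cap Y=\emptyset$. A set $X\subseteq E$ is a left-closed configuration of $(E,\vdash)$ iff for every $Y\subseteq X$ there is $Z\subseteq X$ with $Z\vdash Y$. *)

From mathcomp Require Import all_boot.
From mathcomp Require Import boolp classical_sets.
Set Implicit Arguments. Unset Strict Implicit. Unset Printing Implicit Defensive.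
Local Open Scope classical_set_scope.

Definition event_structure (E : Type) := set E -> set E -> Prop.

Definition pure_es (E : Type) (vdash : event_structure E) : Prop :=
  forall X Y : set E, vdash X Y -> X `&` Y = set0.

Definition left_closed_config (E : Type) (vdash : event_structure E) (X : set E) : Prop :=
  forall Y : set E, Y `<=` X -> exists Z : set E, Z `<=` X /\ vdash Z Y.

Definition es_of_conf (E : Type) (C : set (set E)) : event_structure E :=
  fun X Y => X `&` Y = set0 /\ C (X `|` Y).

From mathcomp Require Import all_boot.
From mathcomp Require Import boolp classical_sets.
Local Open Scope classical_set_scope.

(* A configuration X enables each Y ⊆ X from its complement X \ Y, whose
   union with Y is X itself; conversely, taking Y := X forces some Z ⊆ X
   with Z ∪ X = X in C. *)

Lemma es_of_conf_pure (E : Type) (C : set (set E)) : pure_es (es_of_conf C).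
Proof. by move=> X Y []. Qed.

Lemma left_closed_config_es_of_conf (E : Type) (C : set (set E)) (X : set E) :
  left_closed_config (es_of_conf C) X -> C X.
Proof.
move=> /(_ X (@subset_refl _ X)) [Z [ZX [_ CZX]]].
by rewrite (setUidr ZX) in CZX.
Qed.

Lemma es_of_conf_left_closed_config (E : Type) (C : set (set E)) (X : set E) :
  C X -> left_closed_config (es_of_conf C) X.
Proof.
move=> CX Y YX; exists (X `\` Y); split; first by move=> x [].
split; first by rewrite setDE -setIA setICl setI0.
by rewrite setUC setDUK.
Qed.

Theorem mainTheorem2 (E : Type) (C : set (set E)) :
  pure_es (es_of_conf C) /\
  [set X : set E | left_closed_config (es_of_conf C) X] = C.
Proof.
split; first exact: es_of_conf_pure.
apply/seteqP; split => X /=.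
- exact: left_closed_config_es_of_conf.
- exact: es_of_conf_left_closed_config.
Qed.
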